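(* Let $X$ be a real topological vector space and let $f:X\times X\to\mathbb{R}$ be a bifunction such that for each $x\in X$ the function $-f(x,\cdot)$ is semi-strictly quasi-convex, and $f(x,x)=0$ for all $x\in X$. If $f$ has the star finite intersection property (fip$^*$) on $X$, then $f$ is quasi-monotone on $X$.
   Context: A function $h:X\to\mathbb{R}\cup\{+\infty\}$ is quasi-convex if every sublevel set $\{x\in X: h(x)\leq\lambda\}$, $\lambda\in\mathbb{R}$, is convex; it is semi-strictly quasi-convex if it is quasi-convex and for all $x,y\in X$ with $h(x)\neq h(y)$ one has $h(tx+(1-t)y)<\max\{h(x),h(y)\}$ for all $t\in\,]0,1[$. The bifunction $f$ has the fip$^*$ on a convex set $C$ if for every finite non-empty subset $A$ of $C$ there exists $x\in\operatorname{co}(A)$ with $\max_{a\in A}f(a,x)\leq 0$. The bifunction $f$ is quasi-monotone on $C$ if for all $x,y\in C$, $f(x,y)>0$ implies $f(y,x)\leq 0$. *)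

From HB Require Import structures.
From mathcomp Require Import all_boot all_order all_algebra.
From mathcomp Require Import all_classical all_reals all_analysis.
Set Implicit Arguments. Unset Strict Implicit. Unset Printing Implicit Defensive.
Import Order.TTheory GRing.Theory Num.Theory.
Local Open Scope ring_scope.

Definition quasi_convex (R : realType) (X : lmodType R) (h : X -> R) : Prop :=
  forall lam : R, forall x y : X, forall t : R, 0 <= t <= 1 ->
    h x <= lam -> h y <= lam -> h (t *: x + (1 - t) *: y) <= lam.

Definition semistrictly_quasi_convex (R : realType) (X : lmodType R)
    (h : X -> R) : Prop :=
  quasi_convex h /\
  forall x y : X, h x != h y -> forall t : R, 0 < t < 1 ->
    h (t *: x + (1 - t) *: y) < Num.max (h x) (h y).

Definition in_conv_hull (R : realType) (X : lmodType R) (A : seq X) (x : X)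
    : Prop :=
  exists w : X -> R, (forall a, a \in A -> 0 <= w a) /\
    \sum_(a <- undup A) w a = 1 /\ x = \sum_(a <- undup A) w a *: a.

Definition fip_star (R : realType) (X : lmodType R) (f : X -> X -> R) : Prop :=
  forall A : seq X, A != [::] ->
    exists2 x : X, in_conv_hull A x & forall a, a \in A -> f a x <= 0.

Definition quasi_monotone (R : realType) (X : lmodType R) (f : X -> X -> R)
    : Prop :=
  forall x y : X, 0 < f x y -> f y x <= 0.

From HB Require Import structures.
From mathcomp Require Import all_boot all_order all_algebra.
From mathcomp Require Import all_classical all_reals all_analysis.
Import Order.TTheory GRing.Theory Num.Theory.
Set Implicit Arguments. Unset Strict Implicit. Unset Printing Implicit Defensive.
Local Open Scope ring_scope.

(* If f x y > 0 and f y x > 0, the fip* applied to {x, y} yields a point z of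
   the segment [x, y] with f x z <= 0 and f y z <= 0.  Semi-strict
   quasi-convexity of -f(x, .), together with f x x = 0 > -f x y, forces
   f(x, .) > 0 on [y, x); symmetrically f(y, .) > 0 on (y, x], and these
   two half-open segments cover [x, y]. *)

Section Segments.
Variables (R : realType) (X : lmodType R).

Lemma in_conv_hull_pair (x y z : X) :
  in_conv_hull [:: x; y] z ->
  exists2 t : R, 0 <= t <= 1 & z = t *: x + (1 - t) *: y.
Proof.
case=> w [w_ge0 [+ ->]].
have [<-|xy] := eqVneq x y.
  have -> : undup [:: x; x] = [:: x] by rewrite /= mem_seq1 eqxx.
  rewrite !big_seq1 => ->.
  by exists 1; rewrite ?lexx ?ler01 // subrr scale0r addr0.
have -> : undup [:: x; y] = [:: x; y] by rewrite /= mem_seq1 (negbTE xy).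
rewrite !big_cons !big_nil !addr0 => w_sum.
have wyE : w y = 1 - w x by rewrite -w_sum addrC addKr.
exists (w x); last by rewrite wyE.
by rewrite w_ge0 ?mem_head //= -subr_ge0 -wyE w_ge0 // !inE eqxx orbT.
Qed.

Lemma fip_star_segment (f : X -> X -> R) (x y : X) : fip_star f ->
  exists2 t : R, 0 <= t <= 1 &
    let z := t *: x + (1 - t) *: y in f x z <= 0 /\ f y z <= 0.
Proof.
move=> /(_ [:: x; y] isT) [z /in_conv_hull_pair [t t01 ->] f_le0].
by exists t => //; split; apply: f_le0; rewrite !inE eqxx ?orbT.
Qed.

Lemma semistrictly_quasi_convex_ltl (h : X -> R) (x y : X) (t : R) :
  semistrictly_quasi_convex h -> h y < h x -> 0 < t < 1 ->
  h (t *: x + (1 - t) *: y) < h x.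
Proof.
move=> [_ h_ssqc] hyx t01.
have := h_ssqc x y (negbT (gt_eqF hyx)) t t01.
by rewrite (max_idPl (ltW hyx)).
Qed.

Lemma gt0_on_segment (f : X -> X -> R) (x y : X) (t : R) :
  semistrictly_quasi_convex (fun v => - f x v) -> f x x = 0 ->
  0 < f x y -> 0 <= t < 1 -> 0 < f x (t *: x + (1 - t) *: y).
Proof.
move=> h_ssqc fxx fxy /andP[]; rewrite le_eqVlt => /orP[/eqP <-|t_gt0] t_lt1.
  by rewrite scale0r add0r subr0 scale1r.
have fxy_lt : - f x y < - f x x by rewrite fxx oppr0 oppr_lt0.
have t01 : 0 < t < 1 by rewrite t_gt0.
have := semistrictly_quasi_convex_ltl h_ssqc fxy_lt t01.
by rewrite fxx oppr0 oppr_lt0.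
Qed.
End Segments.

Theorem proposition3p2 (R : realType) (X : topologicalLmodType R)
    (f : X -> X -> R)
    (hsqc : forall x : X, semistrictly_quasi_convex (fun y : X => - f x y))
    (hdiag : forall x : X, f x x = 0)
    (hfip : fip_star f) :
  quasi_monotone f.
Proof.
move=> x y fxy; rewrite leNgt; apply/negP => fyx.
have [t /andP[t_ge0 t_le1] [fxz fyz]] := fip_star_segment x y hfip.
have [t_lt1|t_ge1] := ltP t 1.
  by move: fxz; rewrite leNgt gt0_on_segment ?t_ge0.
have t_gt0 : 0 < t by apply: lt_le_trans t_ge1.
move: fyz; rewrite addrC -[t in t *: x](subKr 1) leNgt gt0_on_segment //.
by rewrite subr_ge0 t_le1 ltrBlDr ltrDl.
Qed.
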